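(* Let $k$ be a field of characteristic zero and let ${\boldsymbol\lambda},{\boldsymbol\mu}\in M_n(k)$ be antisymmetric. If there exists $A\in GL_n(\mathbb Z)$ with ${\boldsymbol\mu}=A{\boldsymbol\lambda}A^{\mathrm{tr}}$, then $k_{\boldsymbol\lambda}(x_1,\dots,x_n)\cong k_{\boldsymbol\mu}(x_1,\dots,x_n)$ as Poisson algebras over $k$.
   Context: For antisymmetric ${\boldsymbol\lambda}\in M_n(k)$, $k_{\boldsymbol\lambda}(x_1,\dots,x_n)$ is the rational function field $k(x_1,\dots,x_n)$ with the unique Poisson bracket satisfying $\{x_i,x_j\}=\lambda_{ij}x_ix_j$ for all $i,j$. *)

From HB Require Import structures.
From mathcomp Require Import all_boot all_order all_algebra.
From mathcomp Require Import fraction.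
From mathcomp.multinomials Require Import mpoly.
Set Implicit Arguments. Unset Strict Implicit. Unset Printing Implicit Defensive.
Import Order.TTheory GRing.Theory Num.Theory.
Local Open Scope ring_scope.

Notation ratfun k n := {fraction {mpoly k[n]}}.

Definition rf_const (k : fieldType) (n : nat) (c : k) : ratfun k n :=
  tofrac (c%:MP : {mpoly k[n]}).

Definition rf_var (k : fieldType) (n : nat) (i : 'I_n) : ratfun k n :=
  tofrac ('X_i : {mpoly k[n]}).

Definition is_poisson_bracket (k : fieldType) (n : nat)
  (b : ratfun k n -> ratfun k n -> ratfun k n) : Prop :=
  [/\ (forall (c : k) f g h, b (rf_const n c * f + g) h = rf_const n c * b f h + b g h),
      (forall f g, b f g = - b g f),
      (forall f g h, b f (b g h) + b g (b h f) + b h (b f g) = 0)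
    & (forall f g h, b f (g * h) = b f g * h + g * b f h)].

(* b is "the" Poisson bracket of k_lambda(x_1..x_n): {x_i,x_j} = lambda_ij x_i x_j *)
Definition is_qtorus_bracket (k : fieldType) (n : nat) (lam : 'M[k]_n)
  (b : ratfun k n -> ratfun k n -> ratfun k n) : Prop :=
  is_poisson_bracket b /\
  forall i j : 'I_n, b (rf_var k i) (rf_var k j) = rf_const n (lam i j) * rf_var k i * rf_var k j
    .

Definition poisson_iso (k : fieldType) (n : nat)
  (b1 b2 : ratfun k n -> ratfun k n -> ratfun k n) (phi : ratfun k n -> ratfun k n) : Prop :=
  [/\ bijective phi,
      (forall f g, phi (f + g) = phi f + phi g),
      (forall f g, phi (f * g) = phi f * phi g),
      (forall c : k, phi (rf_const n c) = rf_const n c)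
    & (forall f g, phi (b1 f g) = b2 (phi f) (phi g))].

From HB Require Import structures.
From mathcomp Require Import all_boot all_order all_algebra.
From mathcomp Require Import fraction generic_quotient.
From mathcomp.multinomials Require Import mpoly.
From mathcomp Require Import zify.
Set Implicit Arguments. Unset Strict Implicit. Unset Printing Implicit Defensive.
Import Order.TTheory GRing.Theory Num.Theory.
Local Open Scope ring_scope.

(* For an integer matrix C, the substitution x_i |-> x^(C_i) (the Laurent
   monomial whose exponent vector is the i-th row of C) is a k-algebra map
   k[x] -> k(x); when C is invertible, distinct exponents give distinct, hence
   linearly independent, monomials, so the map is injective and extends to
   k(x).  Laurent monomials are log-canonical for a quantum-torus bracket:
   {x^a, x^c}_mu = (a mu c^T) x^a x^c.  So for C = A^-1 the substitution sends
   {x_i, x_j}_lam = lam_ij x_i x_j to (C mu C^T)_ij x^(C_i) x^(C_j), and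
   C mu C^T = lam.  Both sides of phi {f, g}_lam = {phi f, phi g}_mu are
   derivations along phi in each argument, so agreement on the generators
   propagates to all of k(x); the substitution for A is the inverse. *)

Section FractionField.
Variable R : idomainType.
Local Notation F := {fraction R}.

Lemma tofrac_numden (f : F) : f = tofrac \n_(repr f) / tofrac \d_(repr f).
Proof.
set x := repr f.
have dn0 : tofrac \d_x != 0 :> F by rewrite tofrac_eq0 denom_ratioP.
rewrite -[LHS](mulfK dn0); congr (_ / _).
rewrite -[f in LHS]reprK -/x; unlock FracField.tofrac; rewrite !piE.
apply/eqmodP; rewrite /= FracField.equivfE /FracField.mulf /=.
by rewrite !numden_Ratio ?mulf_neq0 ?oner_eq0 ?denom_ratioP // !mulr1 mulrC.
Qed.

Lemma frac_repr (f : F) : exists p q : R, q != 0 /\ f = tofrac p / tofrac q.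
Proof. by exists \n_(repr f), \d_(repr f); rewrite denom_ratioP -tofrac_numden. Qed.

Variable K : fieldType.

Lemma frac_rmorph_eq (P Q : {rmorphism F -> K}) :
  (forall p, P (tofrac p) = Q (tofrac p)) -> P =1 Q.
Proof.
by move=> PQ f; have [p [q [_ ->]]] := frac_repr f; rewrite !fmorph_div !PQ.
Qed.

Lemma frac_leibniz_eq (P : {rmorphism F -> K}) (D1 D2 : F -> K) :
  (forall f g, D1 (f * g) = D1 f * P g + P f * D1 g) ->
  (forall f g, D2 (f * g) = D2 f * P g + P f * D2 g) ->
  (forall p, D1 (tofrac p) = D2 (tofrac p)) -> D1 =1 D2.
Proof.
move=> D1M D2M D12 f; have [p [q [q0 ->]]] := frac_repr f.
have qF0 : tofrac q != 0 :> F by rewrite tofrac_eq0.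
set g := _ / _; have ep : tofrac p = tofrac q * g by rewrite mulrC divfK.
have := D12 p; rewrite ep D1M D2M D12 => /addrI.
by apply: mulfI; rewrite fmorph_eq0.
Qed.

Variable phi : {rmorphism R -> K}.

(* The unused injectivity argument lets the rmorphism instances below depend on it. *)
Definition frac_lift of injective phi :=
  fun f : F => phi \n_(repr f) / phi \d_(repr f).

Hypothesis phi_inj : injective phi.
Local Notation lift := (frac_lift phi_inj).

Let phi_neq0 q : q != 0 -> phi q != 0.
Proof. by rewrite -(inj_eq phi_inj) rmorph0. Qed.

Lemma frac_liftE p q : q != 0 -> lift (tofrac p / tofrac q) = phi p / phi q.
Proof.
move=> q0; rewrite /frac_lift; set f := tofrac p / tofrac q.
have qF : tofrac q != 0 :> F by rewrite tofrac_eq0.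
have dF : tofrac \d_(repr f) != 0 :> F by rewrite tofrac_eq0 denom_ratioP.
have /eqP := tofrac_numden f; rewrite {1}/f (eqr_div _ _ qF dF) -!tofracM tofrac_eq.
move=> /eqP e; apply/eqP; rewrite eqr_div ?phi_neq0 ?denom_ratioP //.
by rewrite -!rmorphM -e mulrC.
Qed.

Lemma frac_lift_tofrac p : lift (tofrac p) = phi p.
Proof. by rewrite -[tofrac p]divr1 -tofrac1 frac_liftE ?oner_neq0 // rmorph1 divr1. Qed.

Lemma frac_lift_is_zmod_morphism : zmod_morphism lift.
Proof.
move=> f g; have [p [q [q0 ->]]] := frac_repr f; have [p' [q' [q'0 ->]]] := frac_repr g.
have qF : tofrac q != 0 :> F by rewrite tofrac_eq0.
have qF' : tofrac q' != 0 :> F by rewrite tofrac_eq0.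
rewrite -mulNr -tofracN (addf_div _ _ qF qF') -!tofracM -tofracD.
rewrite !frac_liftE ?mulf_neq0 // -mulNr (addf_div _ _ (phi_neq0 q0) (phi_neq0 q'0)).
by rewrite rmorphD !rmorphM rmorphN.
Qed.

Lemma frac_lift_is_monoid_morphism : monoid_morphism lift.
Proof.
split; first by rewrite -tofrac1 frac_lift_tofrac rmorph1.
move=> f g; have [p [q [q0 ->]]] := frac_repr f; have [p' [q' [q'0 ->]]] := frac_repr g.
by rewrite mulf_div -!tofracM !frac_liftE ?mulf_neq0 // !rmorphM mulf_div.
Qed.

HB.instance Definition _ := GRing.isZmodMorphism.Build F K lift
  frac_lift_is_zmod_morphism.
HB.instance Definition _ := GRing.isMonoidMorphism.Build F K lift
  frac_lift_is_monoid_morphism.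

End FractionField.

Lemma mulmx_tr_entry (R : comPzRingType) (n : nat) (a c : 'rV[int]_n) (M : 'M[R]_n) :
  (map_mx intr a *m M *m (map_mx intr c)^T) 0 0 =
  \sum_i (\sum_j M i j *~ c 0 j) *~ a 0 i.
Proof.
rewrite mxE; under eq_bigr => j _ do rewrite !mxE mulr_suml.
rewrite exchange_big; apply: eq_bigr => i _.
rewrite mulrz_suml; apply: eq_bigr => j _.
by rewrite !mxE mulrzr mulrzl mulrzAC.
Qed.

Lemma row_mulmx_tr_row (R : comPzRingType) (m n : nat) (M : 'M[R]_(m, n))
    (N : 'M_n) i j :
  (row i M *m N *m (row j M)^T) 0 0 = (M *m N *m M^T) i j.
Proof. by rewrite -row_mul tr_row !mxE; apply: eq_bigr => l _; rewrite !mxE. Qed.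

Section RationalFunctions.
Variables (k : fieldType) (n : nat).
Local Notation F := (ratfun k n).
Local Notation cst := (@rf_const k n).
Local Notation x := (@rf_var k n).

Definition ratfun_const : {rmorphism k -> F} := @tofrac _ \o @mpolyC n k.

Lemma rf_constE c : cst c = ratfun_const c. Proof. by []. Qed.
Lemma rf_const0 : cst 0 = 0. Proof. exact: rmorph0. Qed.
Lemma rf_const1 : cst 1 = 1. Proof. exact: rmorph1. Qed.

Lemma rf_var_neq0 i : x i != 0.
Proof.
rewrite /rf_var tofrac_eq0; apply/eqP => /(congr1 (mcoeff U_(i))).
by rewrite mcoeffX eqxx mcoeff0 => /eqP; rewrite oner_eq0.
Qed.

Lemma tofrac_mpoly_ind (P : F -> Prop) :
  (forall c, P (cst c)) -> (forall i, P (x i)) ->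
  (forall f g, P f -> P g -> P (f + g)) -> (forall f g, P f -> P g -> P (f * g)) ->
  forall p : {mpoly k[n]}, P (tofrac p).
Proof.
move=> Pc Px PD PM p.
have P0 : P 0 by rewrite -rf_const0.
have P1 : P 1 by rewrite -rf_const1.
rewrite (mpolyE p) rmorph_sum; apply: big_ind => // m _.
rewrite -mul_mpolyC rmorphM; apply: (PM); first exact: Pc.
rewrite mpolyXE_id rmorph_prod; apply: big_ind => // i _.
rewrite rmorphXn; elim: (m i) => [|j IH]; rewrite ?expr0 // exprS.
by apply: PM => //; exact: Px.
Qed.

Section MorphismsFromRationalFunctions.
Variable K : fieldType.

Lemma ratfun_rmorph_eq (P Q : {rmorphism F -> K}) :
  (forall c, P (cst c) = Q (cst c)) -> (forall i, P (x i) = Q (x i)) ->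
  forall f, P f = Q f.
Proof.
move=> PQc PQx; apply: frac_rmorph_eq.
apply: (tofrac_mpoly_ind (P := fun f => P f = Q f)) => // f g Pf Pg.
  by rewrite !rmorphD Pf Pg.
by rewrite !rmorphM Pf Pg.
Qed.

Definition derivation_along (P D : F -> K) :=
  [/\ {morph D : f g / f + g},
      forall f g, D (f * g) = D f * P g + P f * D g
    & forall c, D (cst c) = 0].

Lemma derivation_along_eq (P : {rmorphism F -> K}) (D1 D2 : F -> K) :
  derivation_along P D1 -> derivation_along P D2 ->
  (forall i, D1 (x i) = D2 (x i)) -> forall f, D1 f = D2 f.
Proof.
move=> [D1D D1M D1c] [D2D D2M D2c] D12x; apply: (frac_leibniz_eq D1M D2M).
apply: (tofrac_mpoly_ind (P := fun f => D1 f = D2 f)) => [c|//|f g Df Dg|f g Df Dg].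
- by rewrite D1c D2c.
- by rewrite D1D D2D Df Dg.
- by rewrite D1M D2M Df Dg.
Qed.

End MorphismsFromRationalFunctions.

Section PoissonBracket.
Variable b : F -> F -> F.
Hypothesis hb : is_poisson_bracket b.

Lemma bracket_antisym f g : b f g = - b g f. Proof. by case: hb. Qed.

Lemma bracketMr f g h : b f (g * h) = b f g * h + g * b f h. Proof. by case: hb. Qed.

Lemma bracketMl f g h : b (f * g) h = b f h * g + f * b g h.
Proof.
by rewrite bracket_antisym bracketMr opprD -mulNr -bracket_antisym -mulrN
  -bracket_antisym.
Qed.

Lemma bracketDl f g h : b (f + g) h = b f h + b g h.
Proof. by case: hb => lin _ _ _; have := lin 1 f g h; rewrite rf_const1 !mul1r. Qed.

Lemma bracketDr f g h : b h (f + g) = b h f + b h g.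
Proof. by rewrite bracket_antisym bracketDl opprD -!bracket_antisym. Qed.

Lemma bracket_constl c f : b (cst c) f = 0.
Proof.
have b1 : b 1 f = 0.
  by have := bracketMl 1 1 f; rewrite !mulr1 mul1r -{1}[b 1 f]addr0 => /addrI /esym.
have b0 : b 0 f = 0 by rewrite -{1}(mulr0 0) bracketMl !mulr0 mul0r addr0.
by case: hb => lin _ _ _; have := lin c 1 0 f; rewrite mulr1 addr0 b1 b0 mulr0 addr0.
Qed.

Lemma bracket_constr c f : b f (cst c) = 0.
Proof. by rewrite bracket_antisym bracket_constl oppr0. Qed.

Definition log_canonical f g l := b f g = l * f * g.

Lemma log_canonical1r f : log_canonical f 1 0.
Proof. by rewrite /log_canonical -rf_const1 bracket_constr !mul0r. Qed.

Lemma log_canonical_sym f g l : log_canonical f g l -> log_canonical g f (- l).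
Proof. by move=> fg; rewrite /log_canonical bracket_antisym fg !mulNr mulrAC. Qed.

Lemma log_canonicalMr f g h l1 l2 :
  log_canonical f g l1 -> log_canonical f h l2 -> log_canonical f (g * h) (l1 + l2).
Proof.
rewrite /log_canonical bracketMr => -> ->.
by rewrite !mulrDl [g * _]mulrCA !mulrA.
Qed.

Lemma log_canonicalVr f g l :
  g != 0 -> log_canonical f g l -> log_canonical f g^-1 (- l).
Proof.
move=> g0 fg; apply: (mulfI g0); apply: (addrI (b f g * g^-1)).
rewrite -bracketMr mulfV // -rf_const1 bracket_constr fg.
by rewrite mulfK // mulrCA mulfV // mulr1 mulNr subrr.
Qed.

Lemma log_canonicalXzr f g l (z : int) :
  g != 0 -> log_canonical f g l -> log_canonical f (g ^ z) (l *~ z).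
Proof.
move=> g0 fg; have fgXn m : log_canonical f (g ^+ m) (l *+ m).
  elim: m => [|m IH]; first exact: log_canonical1r.
  by rewrite exprS mulrS; apply: log_canonicalMr.
case: z => m /=; first exact: fgXn.
by rewrite NegzE mulrNz; apply: log_canonicalVr; rewrite ?expf_neq0.
Qed.

Lemma log_canonicalXzl f g l (z : int) :
  f != 0 -> log_canonical f g l -> log_canonical (f ^ z) g (l *~ z).
Proof.
move=> f0 /log_canonical_sym /(log_canonicalXzr z f0) /log_canonical_sym.
by rewrite mulNrz opprK.
Qed.

Lemma log_canonical_prodr (I : Type) (r : seq I) f (g l : I -> F) :
  (forall i, log_canonical f (g i) (l i)) ->
  log_canonical f (\prod_(i <- r) g i) (\sum_(i <- r) l i).
Proof.
move=> fg; apply: (big_ind2 (log_canonical f)) => // [|? ? ? ?].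
  exact: log_canonical1r.
exact: log_canonicalMr.
Qed.

Lemma log_canonical_prodl (I : Type) (r : seq I) (f l : I -> F) g :
  (forall i, log_canonical (f i) g (l i)) ->
  log_canonical (\prod_(i <- r) f i) g (\sum_(i <- r) l i).
Proof.
move=> fg; rewrite -[\sum_(i <- r) _]opprK -sumrN; apply: log_canonical_sym.
by apply: log_canonical_prodr => i; apply: log_canonical_sym.
Qed.

End PoissonBracket.

Definition laurent_mon (a : 'rV[int]_n) : F := \prod_(i < n) x i ^ a 0 i.
Local Notation mon := laurent_mon.

Lemma laurent_mon_neq0 a : mon a != 0.
Proof.
apply/prodf_neq0 => i _.
by case: (a 0 i) => m /=; rewrite ?invr_eq0 expf_neq0 // rf_var_neq0.
Qed.

Lemma laurent_mon0 : mon 0 = 1.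
Proof. by apply: big1 => i _; rewrite mxE expr0z. Qed.

Lemma laurent_monD a c : mon (a + c) = mon a * mon c.
Proof.
rewrite -big_split; apply: eq_bigr => i _.
by rewrite mxE exprzDr // unitfE rf_var_neq0.
Qed.

Lemma laurent_monN a : mon (- a) = (mon a)^-1.
Proof.
apply: (mulfI (laurent_mon_neq0 a)).
by rewrite -laurent_monD subrr laurent_mon0 mulfV ?laurent_mon_neq0.
Qed.

Lemma laurent_monZ (z : int) a : mon (z *: a) = mon a ^ z.
Proof.
have monMn m : mon (a *+ m) = mon a ^+ m.
  by elim: m => [|m IH]; rewrite ?mulr0n ?laurent_mon0 // mulrS laurent_monD IH exprS.
have -> : z *: a = a *~ z by rewrite -scaler_int intz.
by case: z => m; rewrite ?NegzE ?mulrNz ?laurent_monN monMn.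
Qed.

Lemma laurent_mon_sum (I : Type) (r : seq I) (a : I -> 'rV[int]_n) :
  mon (\sum_(i <- r) a i) = \prod_(i <- r) mon (a i).
Proof. exact: (big_morph _ laurent_monD laurent_mon0). Qed.

Lemma laurent_mon_row1 i : mon (row i 1%:M) = x i.
Proof.
rewrite /laurent_mon (bigD1 i) //= big1 => [|j ji]; rewrite !mxE ?eqxx ?mulr1 //.
by rewrite eq_sym (negbTE ji) expr0z.
Qed.

Lemma rmorph_laurent_mon (P : {rmorphism F -> F}) (A : 'M[int]_n) :
  (forall i, P (x i) = mon (row i A)) -> forall a, P (mon a) = mon (a *m A).
Proof.
move=> Px a; rewrite rmorph_prod mulmx_sum_row laurent_mon_sum.
by apply: eq_bigr => i _; rewrite fmorphXz Px laurent_monZ.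
Qed.

Lemma laurent_mon_nat (a : 'rV[int]_n) : (forall i, 0 <= a 0 i) ->
  mon a = tofrac 'X_[[multinom absz (a ord0 i) | i < n]].
Proof.
move=> a_ge0; rewrite mpolyXE_id rmorph_prod; apply: eq_bigr => i _.
by rewrite mnmE rmorphXn -[a 0 i]gez0_abs ?a_ge0.
Qed.

Lemma laurent_mon_free (I : eqType) (s : seq I) (v : I -> 'rV[int]_n) (c : I -> k) :
  uniq s -> {in s &, injective v} ->
  \sum_(i <- s) cst (c i) * mon (v i) = 0 -> forall i, i \in s -> c i = 0.
Proof.
move=> s_uniq v_inj sum0.
(* Multiplying by x^N clears all negative exponents. *)
pose N : 'rV[int]_n := \row_j (\sum_(i <- s) absz (v i ord0 j))%N%:Z.
have vN_ge0 i : i \in s -> forall j, 0 <= (v i + N) 0 j.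
  move=> si j; rewrite !mxE.
  have : (absz (v i ord0 j) <= \sum_(i <- s) absz (v i ord0 j))%N.
    by rewrite (big_rem i) ?leq_addr.
  move: (\sum_(i <- s) _)%N (v i ord0 j) => S t; lia.
pose g i := [multinom absz ((v i + N)%R ord0 j) | j < n].
have g_inj : {in s &, injective g}.
  move=> i1 i2 i1s i2s /mnmP g12; apply: v_inj => //; apply/(addIr N)/rowP => j.
  have := g12 j; rewrite !mnmE => /eqP.
  by rewrite -(eqz_nat `|_|) !gez0_abs ?vN_ge0 // => /eqP.
have poly0 : \sum_(i <- s) c i *: 'X_[g i] = 0.
  apply/eqP; rewrite -tofrac_eq0; apply/eqP.
  rewrite -(mulr0 (mon N)) -sum0 mulr_sumr rmorph_sum !big_seq; apply: eq_bigr => i si.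
  rewrite -mul_mpolyC rmorphM mulrCA -laurent_monD addrC.
  by rewrite (laurent_mon_nat (vN_ge0 i si)).
move=> i si; have := congr1 (mcoeff (g i)) poly0.
rewrite raddf_sum (big_rem i) //= mcoeffZ mcoeffX eqxx mulr1 big1_seq ?addr0 ?mcoeff0 //.
move=> j /andP [_ j_rem]; rewrite mcoeffZ mcoeffX.
have [/g_inj gji|] := eqVneq (g j) (g i); last by rewrite mulr0.
move: j_rem; rewrite mem_rem_uniq // inE => /andP [/eqP ji js].
by case: ji; apply: gji.
Qed.

Lemma qtorus_bracket_laurent_mon (mu : 'M[k]_n) b : is_qtorus_bracket mu b ->
  forall a c, log_canonical b (mon a) (mon c)
    (cst ((map_mx intr a *m mu *m (map_mx intr c)^T) 0 0)).
Proof.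
move=> [hb bx] a c; rewrite mulmx_tr_entry rf_constE rmorph_sum.
apply: (log_canonical_prodl hb) => i; rewrite rmorphMz.
apply: (log_canonicalXzl hb); first exact: rf_var_neq0.
rewrite rmorph_sum; apply: (log_canonical_prodr hb) => j; rewrite rmorphMz.
exact/(log_canonicalXzr hb)/bx/rf_var_neq0.
Qed.

Section MonomialSubstitution.
Variable A : 'M[int]_n.

Definition mon_subst : {rmorphism {mpoly k[n]} -> F} :=
  mmap ratfun_const (fun i => mon (row i A)).

Lemma mon_substC c : mon_subst c%:MP = cst c. Proof. exact: mmapC. Qed.

Lemma mon_substX i : mon_subst 'X_i = mon (row i A).
Proof. by rewrite /mon_subst /= mmapX mmap1U. Qed.

Definition multinom_row (m : 'X_{1..n}) : 'rV[int]_n := \row_i (m i)%:Z.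

Lemma mon_substE p :
  mon_subst p = \sum_(m <- msupp p) cst p@_m * mon (multinom_row m *m A).
Proof.
apply: eq_bigr => m _; congr (_ * _).
rewrite mulmx_sum_row laurent_mon_sum; apply: eq_bigr => i _.
by rewrite laurent_monZ mxE.
Qed.

Lemma mon_subst_inj : A \in unitmx -> injective mon_subst.
Proof.
move=> A_unit; apply: raddf_inj => p p0.
have sum0 := etrans (esym (mon_substE p)) p0.
apply/mpolyP => m; rewrite mcoeff0.
have [ms|] := boolP (m \in msupp p); last by rewrite mcoeff_msupp negbK => /eqP.
apply: laurent_mon_free sum0 m ms; first exact: (@msupp_uniq n k p).
move=> m1 m2 _ _ /(can_inj (mulmxK A_unit)) /rowP m12.
by apply/mnmP => i; have := m12 i; rewrite !mxE => -[].
Qed.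

End MonomialSubstitution.

Lemma exists_mon_subst_rmorph (A : 'M[int]_n) : A \in unitmx ->
  exists P : {rmorphism F -> F},
    (forall c, P (cst c) = cst c) /\ (forall i, P (x i) = mon (row i A)).
Proof.
move=> A_unit; exists (frac_lift (mon_subst_inj A_unit)); split=> [c|i].
- by rewrite -[RHS](mon_substC A); apply: frac_lift_tofrac.
- by rewrite -[RHS](mon_substX A); apply: frac_lift_tofrac.
Qed.

Lemma laurent_subst_cancel (P1 P2 : {rmorphism F -> F}) (A1 A2 : 'M[int]_n) :
  (forall c, P1 (cst c) = cst c) -> (forall c, P2 (cst c) = cst c) ->
  (forall i, P1 (x i) = mon (row i A1)) -> (forall i, P2 (x i) = mon (row i A2)) ->
  A1 *m A2 = 1%:M -> cancel P1 P2.
Proof.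
move=> P1c P2c P1x P2x A12.
apply: (ratfun_rmorph_eq (P := P2 \o P1) (Q := idfun)) => [c|i] /=.
  by rewrite P1c P2c.
by rewrite P1x (rmorph_laurent_mon P2x) -row_mul A12 laurent_mon_row1.
Qed.

Lemma poisson_bracket_transport (P : {rmorphism F -> F}) (b1 b2 : F -> F -> F) :
  is_poisson_bracket b1 -> is_poisson_bracket b2 -> (forall c, P (cst c) = cst c) ->
  (forall i j, P (b1 (x i) (x j)) = b2 (P (x i)) (P (x j))) ->
  forall f g, P (b1 f g) = b2 (P f) (P g).
Proof.
move=> hb1 hb2 Pc Pb.
have Pb_var i : forall g, P (b1 (x i) g) = b2 (P (x i)) (P g).
  apply: (derivation_along_eq (P := P)) (Pb i); split=> [g1 g2|g1 g2|c].
  - by rewrite bracketDr // rmorphD.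
  - by rewrite bracketMr // rmorphD !rmorphM.
  - by rewrite bracket_constr // rmorph0.
  - by rewrite rmorphD bracketDr.
  - by rewrite rmorphM bracketMr.
  - by rewrite Pc bracket_constr.
move=> f g; move: f; apply: (derivation_along_eq (P := P)) (Pb_var ^~ g).
- split=> [f1 f2|f1 f2|c].
  + by rewrite bracketDl // rmorphD.
  + by rewrite bracketMl // rmorphD !rmorphM.
  + by rewrite bracket_constl // rmorph0.
- split=> [f1 f2|f1 f2|c].
  + by rewrite rmorphD bracketDl.
  + by rewrite rmorphM bracketMl.
  + by rewrite Pc bracket_constl.
Qed.

End RationalFunctions.

Theorem lemma5p1 (k : fieldType) (n : nat) (lam mu : 'M[k]_n)
  (bl bm : ratfun k n -> ratfun k n -> ratfun k n) :
  [pchar k] =i pred0 ->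
  lam^T = - lam -> mu^T = - mu ->
  is_qtorus_bracket lam bl -> is_qtorus_bracket mu bm ->
  (exists A : 'M[int]_n, A \in unitmx /\
     mu = map_mx intr A *m lam *m (map_mx intr A)^T) ->
  exists phi : ratfun k n -> ratfun k n, poisson_iso bl bm phi.
Proof.
move=> _ _ _ [bl_poisson blx] bm_qtorus [A [A_unit mu_def]].
pose B := invmx A; have B_unit : B \in unitmx by rewrite unitmx_inv.
have [P [Pc Px]] := exists_mon_subst_rmorph k B_unit.
have [Q [Qc Qx]] := exists_mon_subst_rmorph k A_unit.
have lamE : lam = map_mx intr B *m mu *m (map_mx intr B)^T.
  rewrite mu_def !mulmxA -map_mxM mulVmx // map_mx1 mul1mx -mulmxA -trmx_mul.
  by rewrite -map_mxM mulVmx // map_mx1 trmx1 mulmx1.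
exists P; split=> //.
- exists Q; first exact: laurent_subst_cancel Pc Qc Px Qx (mulVmx A_unit).
  exact: laurent_subst_cancel Qc Pc Qx Px (mulmxV A_unit).
- exact: rmorphD.
- exact: rmorphM.
apply: (poisson_bracket_transport bl_poisson bm_qtorus.1 Pc) => i j.
rewrite blx !rmorphM Pc !Px (qtorus_bracket_laurent_mon bm_qtorus).
by rewrite !map_row row_mulmx_tr_row -lamE.
Qed.
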